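(* Let $p_0<0$, $\alpha\in(0,1)$, $\mathbb{S}:=\mathbb{R}/(2\pi\mathbb{Z})$, $\Omega:=\mathbb{S}\times(p_0,0)$, and let $N\ge3$ be an integer. Let $u_1,\dots,u_5$ be functions on $\overline\Omega$ with $\partial_q^n u_i\in C^\alpha(\overline\Omega)$ for all $0\le n\le N$ and $1\le i\le 5$. \begin{itemize} \item[(i)] If $L\ge1$ and $\|\partial_q^n u_i\|_\alpha\le L^{n-3/2}(n-2)!$ for all $2\le n\le N$ (and all $i$), then there exists a constant $C_0>1$ such that \[\|\partial_q^n(u_1u_2u_3u_4u_5)\|_\alpha\le C_0\Big(1+\sum_{i=1}^5\sum_{l=0}^1\|\partial_q^l u_i\|_\alpha\Big)^{16}L^{n-3/2}(n-2)!\quad\text{for all } 2\le n\le N.\] \item[(ii)] If $L\ge1$ and $\|\partial_q^n u_i\|_\alpha\le L^{n-1}(n-2)!$ for all $2\le n\le N$ (and all $i$), then there exists a constant $C_1>1$ such that \[\|\partial_q^n(u_1u_2u_3)\|_\alpha\le C_1\Big(1+\sum_{i=1}^3\sum_{l=0}^1\|\partial_q^l u_i\|_\alpha\Big)^{6}L^{n-1}(n-2)!\quad\text{for all } 2\le n\le N.\] \item[(iii)] If $L\ge1$ and $\|\partial_q^n u_i\|_\alpha\le L^{n-2}(n-3)!$ for all $3\le n\le N$ (and all $i$), then there exists a constant $C_2>1$ such that \[\|\partial_q^n(u_1u_2)\|_\alpha\le C_2\Big(1+\sum_{i=1}^2\sum_{l=0}^2\|\partial_q^l u_i\|_\alpha\Big)^{2}L^{n-2}(n-3)!\quad\text{for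 all } 3\le n\le N.\] \end{itemize} The constants $C_0$, $C_1$ and $C_2$ do not depend on $L$.
   Context: $\|\cdot\|_\alpha$ denotes the norm of the Hölder space $C^\alpha(\overline\Omega)$, normalized so that $\|uv\|_\alpha\le\|u\|_\alpha\|v\|_\alpha$. $\partial_q$ denotes differentiation with respect to the first variable $q\in\mathbb{S}$. *)

From Stdlib Require Import Reals Factorial.
From Coquelicot Require Import Coquelicot.
Open Scope R_scope.

(* Points of the closure of Omega = S x (p0,0) are represented by (q,p) with
   q : R (a representative of q mod 2*PI) and p0 <= p <= 0. Functions on the
   closure are functions R -> R -> R that are 2*PI-periodic in q. *)
Definition in_clos (p0 q p : R) : Prop := p0 <= p <= 0.

Definition periodic_q (u : R -> R -> R) : Prop :=
  forall q p, u (q + 2 * PI) p = u q p.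

Definition dq (n : nat) (u : R -> R -> R) : R -> R -> R :=
  fun q p => Derive_n (fun q' => u q' p) n q.

Definition smooth_q (p0 : R) (N : nat) (u : R -> R -> R) : Prop :=
  forall p, p0 <= p <= 0 -> forall n, (n < N)%nat -> forall q,
    ex_derive (Derive_n (fun q' => u q' p) n) q.

Definition sup_norm (p0 : R) (f : R -> R -> R) : Rbar :=
  Lub_Rbar (fun r => exists q p, in_clos p0 q p /\ r = Rabs (f q p)).

(* Hoelder seminorm; for 2*PI-periodic f the Euclidean distance between
   representatives gives the same supremum as the quotient distance on S x R *)
Definition holder_semi (p0 alpha : R) (f : R -> R -> R) : Rbar :=
  Lub_Rbar (fun r => exists q p q' p',
    in_clos p0 q p /\ in_clos p0 q' p' /\ (q, p) <> (q', p') /\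
    r = Rabs (f q p - f q' p') /
        Rpower (sqrt ((q - q') ^ 2 + (p - p') ^ 2)) alpha).

(* ||f||_alpha = |f|_0 + [f]_alpha (satisfies ||uv|| <= ||u|| ||v||),
   valued in the extended reals (+oo if f is not in C^alpha) *)
Definition holder_normE (p0 alpha : R) (f : R -> R -> R) : Rbar :=
  Rbar_plus (sup_norm p0 f) (holder_semi p0 alpha f).

Definition in_holder (p0 alpha : R) (f : R -> R -> R) : Prop :=
  is_finite (sup_norm p0 f) /\ is_finite (holder_semi p0 alpha f).

(* real-valued norm, meaningful for f in C^alpha *)
Definition holder_norm (p0 alpha : R) (f : R -> R -> R) : R :=
  real (holder_normE p0 alpha f).

Definition admissible (p0 alpha : R) (N : nat) (u : R -> R -> R) : Prop :=
  periodic_q u /\ smooth_q p0 N u /\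
  forall n, (n <= N)%nat -> in_holder p0 alpha (dq n u).

(* By the Leibniz rule and the submultiplicativity of the Hoelder norm, the n-th
   q-derivative of a product is bounded by the binomial convolution of the derivative
   bounds of its factors.  All bounds are taken of the form B * w k, where B collects the
   low-order norms and w k = L^(k-c) (k-m)! for k >= m.  This weight is stable under
   binomial convolution, sum_k C(n,k) w k w (n-k) <= K w n: the power of L is
   submultiplicative, and writing (k-m)! ~ k!/P k for a polynomial P of degree m with
   sum 1/P <= 1 and P (a+b) <= K' (P a + P b) reduces the factorial part to
   1/(P k P (n-k)) <= K' (1/P k + 1/P (n-k)) / P n.  A product of J+1 factors then costs
   K^J B^(J+1). *)

From Stdlib Require Import Reals Factorial Binomial Lra Lia Psatz.
From Coquelicot Require Import Coquelicot.
Open Scope R_scope.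

(* Pascal's recursion: unlike [Binomial.C], [binom n k] vanishes for [n < k], so
   Pascal's rule holds without a boundary case when the Leibniz sum is differentiated. *)
Fixpoint binom (n k : nat) : R :=
  match n, k with
  | _, O => 1
  | O, S _ => 0
  | S n', S k' => binom n' k' + binom n' (S k')
  end.

Lemma binom_n0 n : binom n 0 = 1.
Proof. now destruct n. Qed.

Lemma binom_small n : forall k, (n < k)%nat -> binom n k = 0.
Proof.
  induction n as [|n IH]; intros [|k] Hk; simpl; try lia; try reflexivity.
  rewrite !IH by lia; ring.
Qed.

Lemma binom_ge0 n : forall k, 0 <= binom n k.
Proof.
  induction n as [|n IH]; intros [|k]; simpl; try lra.
  specialize (IH k) as H1; specialize (IH (S k)) as H2; lra.
Qed.

Lemma C_n_0 n : Binomial.C n 0 = 1.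
Proof.
  unfold Binomial.C; rewrite Nat.sub_0_r; simpl (INR (fact 0)).
  field; apply INR_fact_neq_0.
Qed.

Lemma C_n_n n : Binomial.C n n = 1.
Proof.
  unfold Binomial.C; rewrite Nat.sub_diag; simpl (INR (fact 0)).
  field; apply INR_fact_neq_0.
Qed.

Lemma binom_C n : forall k, (k <= n)%nat -> binom n k = Binomial.C n k.
Proof.
  induction n as [|n IH]; intros [|k] Hk; try lia.
  - now rewrite C_n_0.
  - now rewrite binom_n0, C_n_0.
  - simpl binom. destruct (Nat.eq_dec k n) as [->|Hkn].
    + rewrite (binom_small n (S n)), IH, !C_n_n by lia; ring.
    + rewrite !IH by lia; apply pascal; lia.
Qed.

Lemma binom_fact n k : (k <= n)%nat ->
  binom n k * INR (fact k) * INR (fact (n - k)) = INR (fact n).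
Proof.
  intros Hk; rewrite binom_C by exact Hk; unfold Binomial.C; field.
  split; apply INR_fact_neq_0.
Qed.

Lemma sum_binom_pascal (A : nat -> nat -> R) n :
  sum_f_R0 (fun k => binom n k * (A (S k) (n - k)%nat + A k (S (n - k)))) n =
  sum_f_R0 (fun k => binom (S n) k * A k (S n - k)%nat) (S n).
Proof.
  assert (Hlast : sum_f_R0 (fun k => binom n k * A k (S n - k)%nat) (S n) =
    sum_f_R0 (fun k => binom n k * A k (S (n - k))) n).
  { rewrite tech5, (binom_small n (S n)), Rmult_0_l, Rplus_0_r by lia.
    apply sum_eq; intros i Hi; now rewrite (Nat.sub_succ_l i n Hi). }
  assert (Hfirst : sum_f_R0 (fun k => binom n k * A k (S n - k)%nat) (S n) =
    A 0%nat (S n) + sum_f_R0 (fun i => binom n (S i) * A (S i) (n - i)%nat) n).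
  { rewrite (decomp_sum _ (S n)) by lia; simpl Nat.pred.
    now rewrite binom_n0, Nat.sub_0_r, Rmult_1_l. }
  rewrite (decomp_sum _ (S n)) by lia; simpl Nat.pred; rewrite Nat.sub_0_r.
  rewrite (sum_eq _ (fun k => binom n k * A (S k) (n - k)%nat + binom n k * A k (S (n - k))))
    by (intros; ring).
  rewrite sum_plus, <- Hlast, Hfirst.
  rewrite (sum_eq (fun i => binom (S n) (S i) * A (S i) (S n - S i)%nat)
    (fun i => binom n i * A (S i) (n - i)%nat + binom n (S i) * A (S i) (n - i)%nat))
    by (intros; simpl; ring).
  rewrite sum_plus, binom_n0; ring.
Qed.

Lemma is_derive_sum_f_R0 (F : nat -> R -> R) (dF : nat -> R) n x :
  (forall k, (k <= n)%nat -> is_derive (F k) x (dF k)) ->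
  is_derive (fun y => sum_f_R0 (fun k => F k y) n) x (sum_f_R0 dF n).
Proof.
  induction n as [|n IH]; intros H; simpl.
  - apply H; lia.
  - apply (is_derive_plus (fun y => sum_f_R0 (fun k => F k y) n) (F (S n))).
    + apply IH; intros; apply H; lia.
    + apply H; lia.
Qed.

Definition ex_derive_upto (N : nat) (f : R -> R) : Prop :=
  forall n, (n < N)%nat -> forall x, ex_derive (Derive_n f n) x.

Definition leibniz_sum (f g : R -> R) (n : nat) (x : R) : R :=
  sum_f_R0 (fun k => binom n k * Derive_n f k x * Derive_n g (n - k) x) n.

Section Leibniz.

Variables (N : nat) (f g : R -> R).
Hypotheses (Hf : ex_derive_upto N f) (Hg : ex_derive_upto N g).

Lemma is_derive_leibniz_sum n x : (n < N)%nat ->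
  is_derive (leibniz_sum f g n) x (leibniz_sum f g (S n) x).
Proof.
  intros Hn.
  assert (Hterm : forall k, (k <= n)%nat ->
    is_derive (fun y => binom n k * Derive_n f k y * Derive_n g (n - k) y) x
      (binom n k * (Derive_n f (S k) x * Derive_n g (n - k) x
                    + Derive_n f k x * Derive_n g (S (n - k)) x))).
  { intros k Hk.
    assert (Ef := Hf k ltac:(lia) x); assert (Eg := Hg (n - k)%nat ltac:(lia) x).
    auto_derive; [tauto|].
    change (Derive (fun y => Derive_n f k y) x) with (Derive_n f (S k) x).
    change (Derive (fun y => Derive_n g (n - k) y) x) with (Derive_n g (S (n - k)) x).
    ring. }
  unfold leibniz_sum.
  rewrite (sum_eq _ (fun k => binom (S n) k * (Derive_n f k x * Derive_n g (S n - k) x)))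
    by (intros; ring).
  rewrite <- (sum_binom_pascal (fun i j => Derive_n f i x * Derive_n g j x)).
  exact (is_derive_sum_f_R0 _ _ n x Hterm).
Qed.

Lemma Derive_n_mult n x : (n <= N)%nat ->
  Derive_n (fun y => f y * g y) n x = leibniz_sum f g n x.
Proof.
  revert x; induction n as [|n IH]; intros x Hn.
  - unfold leibniz_sum; simpl; ring.
  - simpl Derive_n.
    rewrite (Derive_ext _ (leibniz_sum f g n)) by (intro t; apply IH; lia).
    apply is_derive_unique, is_derive_leibniz_sum; lia.
Qed.

Lemma ex_derive_upto_mult : ex_derive_upto N (fun y => f y * g y).
Proof.
  intros n Hn x.
  apply (ex_derive_ext (leibniz_sum f g n)).
  { intro t; symmetry; apply Derive_n_mult; lia. }
  eexists; apply is_derive_leibniz_sum; exact Hn.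
Qed.

End Leibniz.

Section HolderBounds.

Variables p0 alpha : R.

Definition sup_bound (f : R -> R -> R) (s : R) : Prop :=
  forall q p, in_clos p0 q p -> Rabs (f q p) <= s.

Definition holder_bound (f : R -> R -> R) (h : R) : Prop :=
  forall q p q' p', in_clos p0 q p -> in_clos p0 q' p' -> (q, p) <> (q', p') ->
    Rabs (f q p - f q' p') <= h * Rpower (sqrt ((q - q') ^ 2 + (p - p') ^ 2)) alpha.

Definition holder_bounded (f : R -> R -> R) (M : R) : Prop :=
  exists s h, 0 <= s /\ 0 <= h /\ s + h <= M /\ sup_bound f s /\ holder_bound f h.

Lemma holder_bounded_ge0 f M : holder_bounded f M -> 0 <= M.
Proof. intros (s & h & Hs & Hh & HM & _); lra. Qed.

Lemma holder_bounded_le f M M' : holder_bounded f M -> M <= M' -> holder_bounded f M'.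
Proof. intros (s & h & Hs & Hh & HM & Hsup & Hhol) HMM; exists s, h; repeat split; auto; lra. Qed.

Lemma holder_bounded_ext f g M : (forall q p, in_clos p0 q p -> g q p = f q p) ->
  holder_bounded f M -> holder_bounded g M.
Proof.
  intros E (s & h & Hs & Hh & HM & Hsup & Hhol); exists s, h; repeat split; auto.
  - intros q p Hp; rewrite E by exact Hp; auto.
  - intros q p q' p' Hp Hp' Hne; rewrite !E by assumption; auto.
Qed.

Lemma holder_bounded_plus f g M K : holder_bounded f M -> holder_bounded g K ->
  holder_bounded (fun q p => f q p + g q p) (M + K).
Proof.
  intros (s & h & Hs & Hh & HM & Hsup & Hhol) (s' & h' & Hs' & Hh' & HK & Hsup' & Hhol').
  exists (s + s'), (h + h'); repeat split; try lra.
  - intros q p Hp; eapply Rle_trans; [apply Rabs_triang|].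
    specialize (Hsup q p Hp); specialize (Hsup' q p Hp); lra.
  - intros q p q' p' Hp Hp' Hne.
    replace (f q p + g q p - (f q' p' + g q' p'))
      with ((f q p - f q' p') + (g q p - g q' p')) by ring.
    eapply Rle_trans; [apply Rabs_triang|].
    specialize (Hhol q p q' p' Hp Hp' Hne); specialize (Hhol' q p q' p' Hp Hp' Hne); lra.
Qed.

Lemma holder_bounded_sum (F : nat -> R -> R -> R) (M : nat -> R) n :
  (forall k, (k <= n)%nat -> holder_bounded (F k) (M k)) ->
  holder_bounded (fun q p => sum_f_R0 (fun k => F k q p) n) (sum_f_R0 M n).
Proof.
  induction n as [|n IH]; intros H; simpl.
  - apply H; lia.
  - apply (holder_bounded_plus (fun q p => sum_f_R0 (fun k => F k q p) n) (F (S n))).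
    + apply IH; intros; apply H; lia.
    + apply H; lia.
Qed.

Lemma holder_bounded_scal f c M : 0 <= c -> holder_bounded f M ->
  holder_bounded (fun q p => c * f q p) (c * M).
Proof.
  intros Hc (s & h & Hs & Hh & HM & Hsup & Hhol).
  exists (c * s), (c * h); repeat split; try nra.
  - intros q p Hp; rewrite Rabs_mult, Rabs_pos_eq by exact Hc.
    apply Rmult_le_compat_l; auto.
  - intros q p q' p' Hp Hp' Hne.
    replace (c * f q p - c * f q' p') with (c * (f q p - f q' p')) by ring.
    rewrite Rabs_mult, Rabs_pos_eq, Rmult_assoc by exact Hc.
    apply Rmult_le_compat_l; auto.
Qed.

Lemma holder_bound_mult f g s h s' h' : 0 <= s -> 0 <= h' ->
  sup_bound f s -> holder_bound f h -> sup_bound g s' -> holder_bound g h' ->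
  holder_bound (fun q p => f q p * g q p) (s * h' + h * s').
Proof.
  intros Hs Hh' Hsup Hhol Hsup' Hhol' q p q' p' Hp Hp' Hne.
  set (r := Rpower (sqrt ((q - q') ^ 2 + (p - p') ^ 2)) alpha).
  assert (Hr : 0 < r) by apply exp_pos.
  replace (f q p * g q p - f q' p' * g q' p')
    with (f q p * (g q p - g q' p') + (f q p - f q' p') * g q' p') by ring.
  eapply Rle_trans; [apply Rabs_triang|]; rewrite !Rabs_mult.
  assert (A1 : Rabs (f q p) * Rabs (g q p - g q' p') <= s * (h' * r))
    by (apply Rmult_le_compat; auto using Rabs_pos).
  assert (A2 : Rabs (f q p - f q' p') * Rabs (g q' p') <= (h * r) * s')
    by (apply Rmult_le_compat; auto using Rabs_pos).
  nra.
Qed.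

Lemma holder_bounded_mult f g M K : holder_bounded f M -> holder_bounded g K ->
  holder_bounded (fun q p => f q p * g q p) (M * K).
Proof.
  intros (s & h & Hs & Hh & HM & Hsup & Hhol) (s' & h' & Hs' & Hh' & HK & Hsup' & Hhol').
  exists (s * s'), (s * h' + h * s'); repeat split; try nra.
  - intros q p Hp; rewrite Rabs_mult.
    apply Rmult_le_compat; auto using Rabs_pos.
  - now apply holder_bound_mult.
Qed.

Lemma holder_normE_le f M : holder_bounded f M -> Rbar_le (holder_normE p0 alpha f) M.
Proof.
  intros (s & h & Hs & Hh & HM & Hsup & Hhol).
  apply Rbar_le_trans with (Rbar_plus s h); [|simpl; lra].
  apply Rbar_plus_le_compat; apply Lub_Rbar_correct.
  - intros x (q & p & Hp & ->); simpl; auto.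
  - intros x (q & p & q' & p' & Hp & Hp' & Hne & ->); simpl.
    apply Rle_div_l; [apply exp_pos|]; auto.
Qed.

Hypothesis hp0 : p0 <= 0.

Lemma holder_bounded_holder_norm f : in_holder p0 alpha f ->
  holder_bounded f (holder_norm p0 alpha f).
Proof.
  intros [HS HH]; unfold holder_norm, holder_normE.
  rewrite <- HS, <- HH; simpl.
  destruct (Lub_Rbar_correct (fun r => exists q p, in_clos p0 q p /\ r = Rabs (f q p)))
    as [CS _].
  destruct (Lub_Rbar_correct (fun r => exists q p q' p',
    in_clos p0 q p /\ in_clos p0 q' p' /\ (q, p) <> (q', p') /\
    r = Rabs (f q p - f q' p') / Rpower (sqrt ((q - q') ^ 2 + (p - p') ^ 2)) alpha))
    as [CH _].
  fold (sup_norm p0 f) in CS; fold (holder_semi p0 alpha f) in CH.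
  rewrite <- HS in CS; rewrite <- HH in CH.
  set (s := real (sup_norm p0 f)) in *; set (h := real (holder_semi p0 alpha f)) in *.
  assert (Hsup : sup_bound f s) by (intros q p Hp; apply CS; now exists q, p).
  assert (Hhol : holder_bound f h).
  { intros q p q' p' Hp Hp' Hne.
    apply Rle_div_l; [apply exp_pos|].
    apply CH; now exists q, p, q', p'. }
  assert (H00 : in_clos p0 0 0) by (split; lra).
  exists s, h; repeat split; auto; try lra.
  - eapply Rle_trans; [apply Rabs_pos|]; exact (Hsup 0 0 H00).
  - assert (Hne : (0, 0) <> (1, 0)) by (intro E; injection E; lra).
    specialize (Hhol 0 0 1 0 H00 H00 Hne).
    assert (0 < Rpower (sqrt ((0 - 1) ^ 2 + (0 - 0) ^ 2)) alpha) by apply exp_pos.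
    pose proof (Rabs_pos (f 0 0 - f 1 0)); nra.
Qed.

Lemma holder_norm_ge0 f : in_holder p0 alpha f -> 0 <= holder_norm p0 alpha f.
Proof. intros Hf; exact (holder_bounded_ge0 _ _ (holder_bounded_holder_norm f Hf)). Qed.

End HolderBounds.

Definition binom_conv_bounded (w : nat -> R) (K : R) : Prop :=
  forall n, sum_f_R0 (fun k => binom n k * w k * w (n - k)%nat) n <= K * w n.

Lemma sum_f_R0_ge0 (F : nat -> R) n : (forall k, (k <= n)%nat -> 0 <= F k) ->
  0 <= sum_f_R0 F n.
Proof.
  intros H; apply Rle_trans with (sum_f_R0 (fun _ => 0) n).
  - rewrite sum_cte; lra.
  - apply sum_Rle; auto.
Qed.

Lemma sum_f_R0_rev (F : nat -> R) n : sum_f_R0 (fun k => F (n - k)%nat) n = sum_f_R0 F n.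
Proof.
  induction n as [|n IH]; [reflexivity|].
  rewrite (decomp_sum _ (S n)), tech5 by lia; simpl Nat.pred; rewrite Nat.sub_0_r.
  change (sum_f_R0 (fun i => F (S n - S i)%nat) n) with (sum_f_R0 (fun i => F (n - i)%nat) n).
  rewrite IH; ring.
Qed.

Lemma sum_inv_le_1 (P : nat -> R) n : (forall k, (INR k + 1) * (INR k + 2) <= P k) ->
  sum_f_R0 (fun k => / P k) n <= 1.
Proof.
  intros HP.
  assert (Htele : forall m, sum_f_R0 (fun k => / ((INR k + 1) * (INR k + 2))) m
                            = 1 - / (INR m + 2)).
  { induction m as [|m IH]; [simpl; field|].
    rewrite tech5, IH, S_INR; pose proof (pos_INR m); field; lra. }
  apply Rle_trans with (sum_f_R0 (fun k => / ((INR k + 1) * (INR k + 2))) n).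
  - apply sum_Rle; intros k _; pose proof (pos_INR k).
    apply Rinv_le_contravar; [nra|apply HP].
  - rewrite Htele; pose proof (pos_INR n).
    assert (0 < / (INR n + 2)) by (apply Rinv_0_lt_compat; lra); lra.
Qed.

Section ConvolutionOfPoly.

Variables (G P : nat -> R) (c0 K : R).
Hypotheses (HG0 : forall k, 0 <= G k)
           (HGup : forall k, G k * P k <= c0 * INR (fact k))
           (HGlow : forall k, INR (fact k) <= G k * P k)
           (HP : forall k, (INR k + 1) * (INR k + 2) <= P k)
           (HPadd : forall a b, P (a + b)%nat <= K * (P a + P b))
           (HK : 0 <= K).

Let P_pos k : 0 < P k.
Proof. pose proof (pos_INR k); specialize (HP k); nra. Qed.

Lemma binom_conv_term_le n k : (k <= n)%nat ->
  binom n k * G k * G (n - k)%nat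
    <= c0 ^ 2 * K * (INR (fact n) / P n) * (/ P k + / P (n - k)%nat).
Proof.
  intros Hk; set (j := (n - k)%nat).
  assert (Hn : n = (k + j)%nat) by (unfold j; lia).
  assert (Hsplit : P n <= K * (P k + P j)) by (rewrite Hn; apply HPadd).
  assert (HGle : forall i, G i <= c0 * INR (fact i) / P i).
  { intro i; apply Rle_div_r; [apply P_pos|apply HGup]. }
  pose proof (P_pos k); pose proof (P_pos j); pose proof (P_pos n).
  pose proof (binom_ge0 n k); pose proof (HG0 k); pose proof (HG0 j).
  apply Rle_trans with (binom n k * (c0 * INR (fact k) / P k) * (c0 * INR (fact j) / P j)).
  { apply Rmult_le_compat; try apply Rmult_le_pos; auto; apply Rmult_le_compat_l; auto. }
  replace (binom n k * (c0 * INR (fact k) / P k) * (c0 * INR (fact j) / P j))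
    with (c0 ^ 2 * INR (fact n) * (P n * / (P n * P k * P j)))
    by (rewrite <- (binom_fact n k Hk); fold j; field; lra).
  replace (c0 ^ 2 * K * (INR (fact n) / P n) * (/ P k + / P j))
    with (c0 ^ 2 * INR (fact n) * (K * (P k + P j) * / (P n * P k * P j))) by (field; lra).
  apply Rmult_le_compat_l; [apply Rmult_le_pos; [apply pow2_ge_0|apply pos_INR]|].
  apply Rmult_le_compat_r; [|exact Hsplit].
  apply Rlt_le, Rinv_0_lt_compat; repeat apply Rmult_lt_0_compat; auto.
Qed.

Lemma binom_conv_bounded_of_poly : binom_conv_bounded G (2 * K * c0 ^ 2).
Proof.
  intros n.
  assert (Hfn : INR (fact n) / P n <= G n) by (apply Rle_div_l; [apply P_pos|apply HGlow]).
  assert (0 <= INR (fact n) / P n) by (apply Rdiv_le_0_compat; [apply pos_INR|apply P_pos]).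
  assert (Hsum : sum_f_R0 (fun k => / P k) n <= 1) by (apply sum_inv_le_1, HP).
  apply Rle_trans with
    (sum_f_R0 (fun k => c0 ^ 2 * K * (INR (fact n) / P n) * (/ P k + / P (n - k)%nat)) n).
  { apply sum_Rle; intros k Hk; apply binom_conv_term_le, Hk. }
  rewrite (sum_eq _ (fun k => (/ P k + / P (n - k)%nat) * (c0 ^ 2 * K * (INR (fact n) / P n))))
    by (intros; ring).
  rewrite <- scal_sum, sum_plus, (sum_f_R0_rev (fun k => / P k)).
  assert (0 <= c0 ^ 2 * K) by (apply Rmult_le_pos; [apply pow2_ge_0|exact HK]).
  replace (2 * K * c0 ^ 2 * G n) with (2 * (c0 ^ 2 * K * G n)) by ring.
  apply Rle_trans with (2 * (c0 ^ 2 * K * (INR (fact n) / P n))).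
  - rewrite Rmult_comm; apply Rmult_le_compat_r; [apply Rmult_le_pos; auto|lra].
  - apply Rmult_le_compat_l; [lra|]; apply Rmult_le_compat_l; auto.
Qed.

End ConvolutionOfPoly.

Lemma fact_sub2_conv_bounded : binom_conv_bounded (fun k => INR (fact (k - 2))) 144.
Proof.
  replace 144 with (2 * 2 * 6 ^ 2) by ring.
  apply (binom_conv_bounded_of_poly _ (fun k => (INR k + 1) * (INR k + 2))).
  - intro k; apply pos_INR.
  - intros [|[|j]]; [simpl; lra|simpl; lra|].
    replace (S (S j) - 2)%nat with j by lia; rewrite !fact_simpl, !mult_INR, !S_INR.
    pose proof (INR_fact_lt_0 j); pose proof (pos_INR j); nra.
  - intros [|[|j]]; [simpl; lra|simpl; lra|].
    replace (S (S j) - 2)%nat with j by lia; rewrite !fact_simpl, !mult_INR, !S_INR.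
    pose proof (INR_fact_lt_0 j); pose proof (pos_INR j); nra.
  - intro k; lra.
  - intros a b; rewrite plus_INR; pose proof (pos_INR a); pose proof (pos_INR b).
    pose proof (pow2_ge_0 (INR a - INR b)); nra.
  - lra.
Qed.

Lemma fact_sub3_conv_bounded : binom_conv_bounded (fun k => INR (fact (k - 3))) 28800.
Proof.
  replace 28800 with (2 * 4 * 60 ^ 2) by ring.
  apply (binom_conv_bounded_of_poly _ (fun k => (INR k + 1) * (INR k + 2) * (INR k + 3))).
  - intro k; apply pos_INR.
  - intros [|[|[|j]]]; [simpl; lra|simpl; lra|simpl; lra|].
    replace (S (S (S j)) - 3)%nat with j by lia; rewrite !fact_simpl, !mult_INR, !S_INR.
    pose proof (INR_fact_lt_0 j); pose proof (pos_INR j).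
    set (x := INR j) in *; set (y := INR (fact j)) in *.
    assert ((x + 1 + 1 + 1 + 1) * (x + 1 + 1 + 1 + 2) * (x + 1 + 1 + 1 + 3)
            <= 60 * ((x + 1 + 1 + 1) * ((x + 1 + 1) * (x + 1)))) by nra.
    nra.
  - intros [|[|[|j]]]; [simpl; lra|simpl; lra|simpl; lra|].
    replace (S (S (S j)) - 3)%nat with j by lia; rewrite !fact_simpl, !mult_INR, !S_INR.
    pose proof (INR_fact_lt_0 j); pose proof (pos_INR j).
    set (x := INR j) in *; set (y := INR (fact j)) in *.
    assert ((x + 1 + 1 + 1) * ((x + 1 + 1) * (x + 1))
            <= (x + 1 + 1 + 1 + 1) * (x + 1 + 1 + 1 + 2) * (x + 1 + 1 + 1 + 3)) by nra.
    nra.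
  - intro k; pose proof (pos_INR k); nra.
  - intros a b; rewrite plus_INR; pose proof (pos_INR a); pose proof (pos_INR b).
    set (x := INR a) in *; set (y := INR b) in *.
    assert (0 <= (x + y) * (x - y) ^ 2) by (apply Rmult_le_pos; [lra|apply pow2_ge_0]).
    pose proof (pow2_ge_0 (x - y)); nra.
  - lra.
Qed.

Lemma binom_conv_bounded_scale (lam G : nat -> R) K :
  (forall k, 0 <= G k) -> (forall k, 0 <= lam k) ->
  (forall n k, (k <= n)%nat -> lam k * lam (n - k)%nat <= lam n) ->
  binom_conv_bounded G K -> binom_conv_bounded (fun k => lam k * G k) K.
Proof.
  intros HG Hlam Hsub HK n.
  apply Rle_trans with (sum_f_R0 (fun k => binom n k * G k * G (n - k)%nat * lam n) n).
  - apply sum_Rle; intros k Hk; cbv beta.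
    pose proof (binom_ge0 n k); pose proof (HG k); pose proof (HG (n - k)%nat).
    replace (binom n k * (lam k * G k) * (lam (n - k)%nat * G (n - k)%nat))
      with (binom n k * G k * G (n - k)%nat * (lam k * lam (n - k)%nat)) by ring.
    apply Rmult_le_compat_l; [repeat apply Rmult_le_pos; auto|apply Hsub, Hk].
  - rewrite <- scal_sum; cbv beta.
    replace (K * (lam n * G n)) with (lam n * (K * G n)) by ring.
    apply Rmult_le_compat_l; [apply Hlam|apply HK].
Qed.

(* The [Rmax] makes the power of [L] submultiplicative; below [m] the truncated
   subtraction turns the factorial into 0! = 1, so the weight is at least 1 there. *)
Definition weight (L c : R) (m k : nat) : R :=
  Rpower L (Rmax (INR k - c) 0) * INR (fact (k - m)).

Lemma weight_ge0 L c m k : 0 <= weight L c m k.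
Proof. apply Rmult_le_pos; [apply Rlt_le, exp_pos|apply pos_INR]. Qed.

Lemma weight_conv_bounded L c m K : 1 <= L -> 0 <= c ->
  binom_conv_bounded (fun k => INR (fact (k - m))) K -> binom_conv_bounded (weight L c m) K.
Proof.
  intros HL Hc HK.
  apply (binom_conv_bounded_scale (fun k => Rpower L (Rmax (INR k - c) 0))); auto.
  - intro k; apply pos_INR.
  - intro k; apply Rlt_le, exp_pos.
  - intros n k Hk; rewrite <- Rpower_plus.
    apply Rle_Rpower; [exact HL|].
    assert (INR k <= INR n) by (apply le_INR, Hk); rewrite minus_INR by exact Hk.
    pose proof (pos_INR k).
    unfold Rmax; repeat destruct Rle_dec; lra.
Qed.

Lemma weight_ge1 L c m k : 1 <= L -> 1 <= weight L c m k.
Proof.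
  intros HL; unfold weight; rewrite <- (Rmult_1_l 1).
  apply Rmult_le_compat; try lra.
  - rewrite <- (Rpower_O L) at 1 by lra; apply Rle_Rpower; [lra|apply Rmax_r].
  - apply (le_INR 1), lt_O_fact.
Qed.

Lemma weight_large L c m k : c <= INR m -> (m <= k)%nat ->
  weight L c m k = Rpower L (INR k - c) * INR (fact (k - m)).
Proof.
  intros Hc Hk; unfold weight; rewrite Rmax_left; [reflexivity|].
  apply le_INR in Hk; lra.
Qed.

Fixpoint prod_fun (u : nat -> R -> R -> R) (J : nat) : R -> R -> R :=
  match J with
  | O => u O
  | S j => fun q p => prod_fun u j q p * u (S j) q p
  end.

Section Dominated.

Variables (p0 alpha : R) (N : nat).

Definition dominated (w : nat -> R) (B : R) (f : R -> R -> R) : Prop :=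
  smooth_q p0 N f /\ forall k, (k <= N)%nat -> holder_bounded p0 alpha (dq k f) (B * w k).

Lemma smooth_q_mult f g : smooth_q p0 N f -> smooth_q p0 N g ->
  smooth_q p0 N (fun q p => f q p * g q p).
Proof.
  intros Hf Hg p Hp; exact (ex_derive_upto_mult N _ _ (Hf p Hp) (Hg p Hp)).
Qed.

Lemma dq_mult f g n q p : smooth_q p0 N f -> smooth_q p0 N g -> (n <= N)%nat ->
  in_clos p0 q p ->
  dq n (fun q p => f q p * g q p) q p
    = sum_f_R0 (fun k => binom n k * dq k f q p * dq (n - k) g q p) n.
Proof.
  intros Hf Hg Hn Hp; exact (Derive_n_mult N _ _ (Hf p Hp) (Hg p Hp) n q Hn).
Qed.

Variables (w : nat -> R) (K : R).
Hypotheses (HwK : binom_conv_bounded w K) (HK : 0 <= K).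

Lemma dominated_mult B1 B2 f g : 0 <= B1 -> 0 <= B2 ->
  dominated w B1 f -> dominated w B2 g -> dominated w (K * B1 * B2) (fun q p => f q p * g q p).
Proof.
  intros HB1 HB2 [Sf Hf] [Sg Hg]; split; [now apply smooth_q_mult|].
  intros n Hn.
  apply holder_bounded_ext with
    (fun q p => sum_f_R0 (fun k => binom n k * dq k f q p * dq (n - k) g q p) n).
  { intros q p Hp; now apply dq_mult. }
  apply holder_bounded_le with
    (sum_f_R0 (fun k => binom n k * (B1 * w k) * (B2 * w (n - k)%nat)) n).
  - apply (holder_bounded_sum p0 alpha
      (fun k q p => binom n k * dq k f q p * dq (n - k) g q p)); intros k Hk.
    apply (holder_bounded_mult p0 alpha (fun q p => binom n k * dq k f q p)).
    + apply holder_bounded_scal; [apply binom_ge0|apply Hf; lia].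
    + apply Hg; lia.
  - rewrite (sum_eq _ (fun k => binom n k * w k * w (n - k)%nat * (B1 * B2))) by (intros; ring).
    rewrite <- scal_sum.
    replace (K * B1 * B2 * w n) with (B1 * B2 * (K * w n)) by ring.
    apply Rmult_le_compat_l; [apply Rmult_le_pos; auto|apply HwK].
Qed.

Lemma dominated_prod_fun B (u : nat -> R -> R -> R) J : 0 <= B ->
  (forall i, (i <= J)%nat -> dominated w B (u i)) ->
  dominated w (K ^ J * B ^ S J) (prod_fun u J).
Proof.
  intros HB Hu; induction J as [|J IH].
  - replace (K ^ 0 * B ^ 1) with B by ring; apply Hu; lia.
  - replace (K ^ S J * B ^ S (S J)) with (K * (K ^ J * B ^ S J) * B) by (simpl; ring).
    apply dominated_mult; [apply Rmult_le_pos; apply pow_le; auto|exact HB| |apply Hu; lia].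
    apply IH; intros; apply Hu; lia.
Qed.

End Dominated.

Lemma sum_f_R0_term_le (F : nat -> R) n j : (forall k, (k <= n)%nat -> 0 <= F k) ->
  (j <= n)%nat -> F j <= sum_f_R0 F n.
Proof.
  induction n as [|n IH]; intros H Hj; simpl.
  - replace j with 0%nat by lia; lra.
  - assert (0 <= sum_f_R0 F n) by (apply sum_f_R0_ge0; intros; apply H; lia).
    pose proof (H (S n) (le_n _)).
    destruct (Nat.eq_dec j (S n)) as [->|Hne]; [lra|].
    assert (F j <= sum_f_R0 F n) by (apply IH; [intros; apply H|]; lia); lra.
Qed.

Lemma dominated_of_admissible p0 alpha N m L c B u : p0 <= 0 -> c <= INR m ->
  1 <= L -> 1 <= B -> admissible p0 alpha N u ->
  (forall n, (m <= n <= N)%nat ->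
     holder_norm p0 alpha (dq n u) <= Rpower L (INR n - c) * INR (fact (n - m))) ->
  (forall l, (l < m)%nat -> holder_norm p0 alpha (dq l u) <= B) ->
  dominated p0 alpha N (weight L c m) B u.
Proof.
  intros Hp0 Hc HL HB (_ & Hsmooth & Hholder) Hhigh Hlow; split; [exact Hsmooth|].
  intros k Hk; eapply holder_bounded_le; [now apply holder_bounded_holder_norm, Hholder|].
  pose proof (weight_ge1 L c m k HL).
  destruct (Nat.lt_ge_cases k m) as [Hkm|Hkm].
  - specialize (Hlow k Hkm); nra.
  - specialize (Hhigh k ltac:(lia)); rewrite <- (weight_large L c m k Hc Hkm) in Hhigh; nra.
Qed.

Lemma product_estimate p0 alpha r c K (J e : nat) : p0 < 0 -> 0 <= c <= INR (S r) ->
  0 <= K -> binom_conv_bounded (fun k => INR (fact (k - S r))) K -> (S J <= e)%nat ->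
  forall (N : nat) (u : nat -> R -> R -> R) (L : R),
    (forall i, (i < S J)%nat -> admissible p0 alpha N (u i)) ->
    1 <= L ->
    (forall i n, (i < S J)%nat -> (S r <= n <= N)%nat ->
       holder_norm p0 alpha (dq n (u i)) <= Rpower L (INR n - c) * INR (fact (n - S r))) ->
    forall n, (S r <= n <= N)%nat ->
      Rbar_le (holder_normE p0 alpha (dq n (prod_fun u J)))
        (K ^ J
           * (1 + sum_f_R0 (fun i => sum_f_R0 (fun l => holder_norm p0 alpha (dq l (u i))) r) J) ^ e
           * Rpower L (INR n - c) * INR (fact (n - S r))).
Proof.
  intros Hp0 Hc HK HfactK He N u L Hadm HL Hhigh n Hn.
  set (B := 1 + sum_f_R0 (fun i => sum_f_R0 (fun l => holder_norm p0 alpha (dq l (u i))) r) J).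
  assert (Hlow0 : forall i l, (i <= J)%nat -> (l <= r)%nat ->
    0 <= holder_norm p0 alpha (dq l (u i))).
  { intros i l Hi Hl; destruct (Hadm i ltac:(lia)) as (_ & _ & Hholder).
    apply holder_norm_ge0; [lra|apply Hholder; lia]. }
  assert (Hinner : forall i, (i <= J)%nat ->
    0 <= sum_f_R0 (fun l => holder_norm p0 alpha (dq l (u i))) r).
  { intros i Hi; apply sum_f_R0_ge0; intros; apply Hlow0; lia. }
  assert (HB : 1 <= B) by (pose proof (sum_f_R0_ge0 _ J Hinner); unfold B; lra).
  assert (Hlow : forall i l, (i <= J)%nat -> (l < S r)%nat ->
    holder_norm p0 alpha (dq l (u i)) <= B).
  { intros i l Hi Hl.
    pose proof (sum_f_R0_term_le (fun l => holder_norm p0 alpha (dq l (u i))) r l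
      (fun k Hk => Hlow0 i k Hi Hk) ltac:(lia)).
    pose proof (sum_f_R0_term_le _ J i Hinner Hi).
    unfold B; lra. }
  assert (Hprod : dominated p0 alpha N (weight L c (S r)) (K ^ J * B ^ S J) (prod_fun u J)).
  { apply dominated_prod_fun.
    - apply weight_conv_bounded; [exact HL|lra|exact HfactK].
    - exact HK.
    - lra.
    - intros i Hi; apply dominated_of_admissible; try lra.
      + apply Hadm; lia.
      + intros; apply Hhigh; lia.
      + intros; apply Hlow; lia. }
  eapply Rbar_le_trans; [apply holder_normE_le, (proj2 Hprod n ltac:(lia))|].
  rewrite weight_large by (lra || lia); cbn [Rbar_le].
  pose proof (weight_ge0 L c (S r) n) as Hw; rewrite weight_large in Hw by (lra || lia).
  rewrite !Rmult_assoc; apply Rmult_le_compat_l; [apply pow_le; exact HK|].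
  apply Rmult_le_compat_r; [exact Hw|apply Rle_pow; [exact HB|exact He]].
Qed.

Theorem lemma2p2 (p0 alpha : R) (hp0 : p0 < 0) (ha : 0 < alpha < 1) :
  (exists C0 : R, 1 < C0 /\
    forall (N : nat) (u : nat -> R -> R -> R) (L : R),
      (3 <= N)%nat ->
      (forall i, (i < 5)%nat -> admissible p0 alpha N (u i)) ->
      1 <= L ->
      (forall i n, (i < 5)%nat -> (2 <= n <= N)%nat ->
         holder_norm p0 alpha (dq n (u i))
           <= Rpower L (INR n - 3 / 2) * INR (fact (n - 2))) ->
      forall n, (2 <= n <= N)%nat ->
        Rbar_le
          (holder_normE p0 alpha
             (dq n (fun q p => u 0%nat q p * u 1%nat q p * u 2%nat q p
                               * u 3%nat q p * u 4%nat q p)))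
          (C0 * (1 + sum_f_R0 (fun i => holder_norm p0 alpha (dq 0 (u i))
                                      + holder_norm p0 alpha (dq 1 (u i))) 4) ^ 16
              * Rpower L (INR n - 3 / 2) * INR (fact (n - 2)))) /\
  (exists C1 : R, 1 < C1 /\
    forall (N : nat) (u : nat -> R -> R -> R) (L : R),
      (3 <= N)%nat ->
      (forall i, (i < 3)%nat -> admissible p0 alpha N (u i)) ->
      1 <= L ->
      (forall i n, (i < 3)%nat -> (2 <= n <= N)%nat ->
         holder_norm p0 alpha (dq n (u i))
           <= Rpower L (INR n - 1) * INR (fact (n - 2))) ->
      forall n, (2 <= n <= N)%nat ->
        Rbar_le
          (holder_normE p0 alpha
             (dq n (fun q p => u 0%nat q p * u 1%nat q p * u 2%nat q p)))
          (C1 * (1 + sum_f_R0 (fun i => holder_norm p0 alpha (dq 0 (u i))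
                                      + holder_norm p0 alpha (dq 1 (u i))) 2) ^ 6
              * Rpower L (INR n - 1) * INR (fact (n - 2)))) /\
  (exists C2 : R, 1 < C2 /\
    forall (N : nat) (u : nat -> R -> R -> R) (L : R),
      (3 <= N)%nat ->
      (forall i, (i < 2)%nat -> admissible p0 alpha N (u i)) ->
      1 <= L ->
      (forall i n, (i < 2)%nat -> (3 <= n <= N)%nat ->
         holder_norm p0 alpha (dq n (u i))
           <= Rpower L (INR n - 2) * INR (fact (n - 3))) ->
      forall n, (3 <= n <= N)%nat ->
        Rbar_le
          (holder_normE p0 alpha
             (dq n (fun q p => u 0%nat q p * u 1%nat q p)))
          (C2 * (1 + sum_f_R0 (fun i => holder_norm p0 alpha (dq 0 (u i))
                                      + holder_norm p0 alpha (dq 1 (u i))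
                                      + holder_norm p0 alpha (dq 2 (u i))) 1) ^ 2
              * Rpower L (INR n - 2) * INR (fact (n - 3)))).
Proof.
  split; [|split].
  - exists (144 ^ 4); split; [lra|]; intros N u L _.
    apply (product_estimate p0 alpha 1 (3 / 2) 144 4 16); try lra; try lia.
    + simpl; lra.
    + exact fact_sub2_conv_bounded.
  - exists (144 ^ 2); split; [lra|]; intros N u L _.
    apply (product_estimate p0 alpha 1 1 144 2 6); try lra; try lia.
    + simpl; lra.
    + exact fact_sub2_conv_bounded.
  - exists (28800 ^ 1); split; [lra|]; intros N u L _.
    apply (product_estimate p0 alpha 2 2 28800 1 2); try lra; try lia.
    + simpl; lra.
    + exact fact_sub3_conv_bounded.
Qed.
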